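(* Let $\epsilon>0$. Consider mechanisms $Q:\mathbb{R}\to\Delta(\mathbb{R})$ of the form $Qu=u+V$, where the noise $V$ is a real random variable with probability distribution $g\in\Delta(\mathbb{R})$ that does not depend on the input $u$, and suppose $Q$ is $\epsilon$-Lipschitz private with respect to the metric $|u-u'|$ on $\mathbb{R}$. Then $$\mathbb{E}\big(Qu-u\big)^2=\mathbb{E}_{V\sim g}V^2\;\ge\;\mathbb{E}_{V\sim l}V^2=\frac{2}{\epsilon^2},$$ where $l(v)=\frac{\epsilon}{2}e^{-\epsilon|v|}$ is the Laplace density; i.e. the Laplace mechanism (adding noise with density $l$), which is itself $\epsilon$-Lipschitz private, achieves the minimal mean-squared error for approximating the identity query $q(u)=u$ among all such mechanisms.
   Context: $\Delta(\mathcal{Y})$ denotes the set of probability measures on $\mathcal{Y}$ (with its Borel $\sigma$-algebra). For a normed/metric space $(\mathcal{U},\|\cdot\|)$ and a response set $\mathcal{Y}$, a mechanism $Q:\mathcal{U}\to\Delta(\mathcal{Y})$ is called $\epsilon$-Lipschitz (differentially) private if for all $u,u'\in\mathcal{U}$ and all measurable $\mathcal{S}\subseteq\mathcal{Y}$, $|\ln\mathbb{P}(Qu\in\mathcal{S})-\ln\mathbb{P}(Qu'\in\mathcal{S})|\le\epsilon\|u-u'\|$, equivalently $\mathbb{P}(Qu\in\mathcal{S})\le e^{\epsilon\|u-u'\|}\mathbb{P}(Qu'\in\mathcal{S})$ for all such $u,u',\mathcal{S}$. *)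

From HB Require Import structures.
From mathcomp Require Import all_boot all_order all_algebra.
From mathcomp Require Import all_classical all_reals all_analysis.
Set Implicit Arguments. Unset Strict Implicit. Unset Printing Implicit Defensive.
Import Order.TTheory GRing.Theory Num.Theory.
Local Open Scope classical_set_scope.
Local Open Scope ring_scope.

(* Additive-noise mechanism Q u = u + V with V ~ g (g a set function on the
   Borel sets of R, typically a probability measure):
   P(Q u \in S) = g [set v | u + v \in S].
   eps-Lipschitz privacy w.r.t. |u - u'| in multiplicative form:
   P(Q u \in S) <= exp(eps |u-u'|) P(Q u' \in S) for all u, u', measurable S. *)
Definition additive_noise_lipschitz_private {R : realType} (eps : R)
  (g : set R -> \bar R) : Prop :=
  forall (u u' : R) (S : set R), measurable S ->
    (g [set v | S (u + v)%R] <= (expR (eps * `|u - u'|)%R)%:E * g [set v | S (u' + v)%R])%E.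

Definition laplace_pdf {R : realType} (eps : R) (v : R) : R :=
  eps / 2 * expR (- (eps * `|v|)).

Definition laplace_prob {R : realType} (eps : R) : set R -> \bar R :=
  fun A => (\int[lebesgue_measure]_(x in A) (laplace_pdf eps x)%:E)%E.

From HB Require Import structures.
From mathcomp Require Import all_boot all_order all_algebra.
From mathcomp Require Import all_classical all_reals all_analysis.
From mathcomp Require Import measurable_realfun lra ring.
Import Order.TTheory GRing.Theory Num.Theory.
Import numFieldNormedType.Exports.
Local Open Scope classical_set_scope.
Local Open Scope ring_scope.

(* Privacy applied to the half-lines [0, +oo) and (-oo, 0] translated by y and -y
   gives P(V >= 0) <= e^(eps y) P(V >= y) and P(V <= 0) <= e^(eps y) P(V <= -y);
   since the two half-lines cover R, P(|V| >= y) >= e^(-eps y) for y > 0.  Writing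
   x^2 as the integral of 2y over [0, |x|] and applying Tonelli,
   E V^2 = int_0^oo 2y P(|V| >= y) dy >= int_0^oo 2y e^(-eps y) dy = 2 / eps^2.
   For the Laplace mechanism, P(Q u in S) is the integral of l(v - u) over S
   (translation invariance of Lebesgue measure) and, by the triangle inequality,
   l(v - u) <= e^(eps |u - u'|) l(v - u'); its second moment is computed from an
   explicit antiderivative of (a v^2 + b v + c) e^(-eps v). *)

Section lebesgue_translation.
Context {R : realType}.
Notation mu := (@lebesgue_measure R).
Variable c : R.

Let addc (x : R) := x + c.

Let measurable_addc : measurable_fun setT addc.
Proof. exact: measurable_funD. Qed.

Let mu_addc : {measure set (measurableTypeR R) -> \bar R}.
Proof.
refine (@pushforward _ _ (measurableTypeR R) (measurableTypeR R) R mu addc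
  : {measure set _ -> \bar R}).
exact: measurable_addc.
Defined.

Lemma lebesgue_measure_shift (A : set R) : measurable A ->
  mu A = mu [set x | A (x + c)].
Proof.
move=> mA; have := @lebesgue_measure_unique R mu_addc.
apply=> // _ /ocitvP[->|[[a b] /= ab ->]].
  by rewrite !measure0.
rewrite /mu_addc /= /pushforward.
have -> : addc @^-1` `]a, b] = `]a - c, b - c]%classic.
  by apply/seteqP; split=> x; rewrite /addc /= !in_itv /= ltrBlDr lerBrDr.
rewrite /= !lebesgue_measure_itv /= !lte_fin ltrD2r ab -!EFinB; congr EFin; lra.
Qed.

Lemma ge0_integral_shift (D : set R) (f : R -> R) : measurable D ->
  measurable_fun setT f -> (forall x, 0 <= f x) ->
  (\int[mu]_(x in D) (f x)%:E = \int[mu]_(x in [set x | D (x + c)%R]) (f (x + c)%R)%:E)%E.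
Proof.
move=> mD mf f0.
rewrite (@eq_measure_integral _ (measurableTypeR R) R D mu_addc); last first.
  by move=> A mA _; exact: lebesgue_measure_shift.
rewrite (@ge0_integral_pushforward _ _ (measurableTypeR R) (measurableTypeR R) R
  addc measurable_addc mu D) //; last by move=> y _; rewrite lee_fin.
exact/measurable_EFinP/measurable_funTS.
Qed.

End lebesgue_translation.

Section integrals_of_polynomials_times_expRN.
Context {R : realType}.
Notation mu := (@lebesgue_measure R).
Variable eps : R.
Hypothesis eps_gt0 : 0 < eps.

Lemma cvgy_exprn_expRN (k : nat) :
  (fun x : R => x ^+ k * expR (- (eps * x))) @ +oo --> (0 : R).
Proof.
apply/cvgrPdist_le => e e0; near=> x.
have x_ge1 : 1 <= x by near: x; apply: nbhs_pinfty_ge; exact: num_real.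
have x_gt0 : 0 < x by exact: lt_le_trans x_ge1.
have fact_gt0 : 0 < (k.+1)`!%:R :> R by rewrite ltr0n fact_gt0.
have x_large : (k.+1)`!%:R / (e * eps ^+ k.+1) <= x.
  by near: x; apply: nbhs_pinfty_ge; exact: num_real.
rewrite sub0r normrN ger0_norm; last by rewrite mulr_ge0 ?expR_ge0 ?exprn_ge0 ?ltW.
rewrite expRN ler_pdivrMr ?expR_gt0 //.
(* [e^(eps x) >= (eps x)^(k+1) / (k+1)!], and [e] times this dominates [x^k]
   once [x] is large *)
apply: le_trans (ler_wpM2l (ltW e0) (expR_ge1Dxn k (mulr_ge0 (ltW eps_gt0) (ltW x_gt0)))).
have x_ge : 1 <= x * (e * eps ^+ k.+1 / (k.+1)`!%:R).
  by rewrite -ler_pdivrMr ?divr_gt0 ?mulr_gt0 ?exprn_gt0 // div1r invf_div.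
rewrite mulrDr mulr1 -[leLHS]add0r; apply: lerD; first exact: ltW.
have -> : e * ((eps * x) ^+ k.+1 / (k.+1)`!%:R) =
    x ^+ k * (x * (e * eps ^+ k.+1 / (k.+1)`!%:R)).
  by rewrite exprMn [x ^+ k.+1]exprS; ring.
by rewrite -[leLHS]mulr1; apply: ler_wpM2l => //; rewrite exprn_ge0 ?ltW.
Unshelve. all: end_near. Qed.

Lemma ge0_integral_itv0y_antiderivative (f F : R -> R) (l : R) :
  (forall x, 0 <= x -> 0 <= f x) -> continuous f ->
  (forall x : R, is_derive x (1 : R) F (f x)) -> F x @[x --> +oo] --> l ->
  (\int[mu]_(x in `[0%R, +oo[) (f x)%:E = (l - F 0)%:E)%E.
Proof.
move=> f_ge0 cf dF Fl; rewrite EFinB; apply: ge0_continuous_FTC2y => //.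
- exact: continuous_subspaceT.
- apply/cvg_at_right_filter/differentiable_continuous/derivable1_diffP.
  by have dF0 := dF 0; exact: ex_derive.
- by move=> x _; rewrite derive1E (@derive_val _ _ _ x 1 F (f x) (dF x)).
Qed.

Definition quadratic (a b c x : R) := a * x ^+ 2 + b * x + c.

Definition quadratic_expRN (a b c x : R) := quadratic a b c x * expR (- (eps * x)).

Lemma is_derive_quadratic (a b c x : R) :
  is_derive x (1 : R) (quadratic a b c) (2 * a * x + b).
Proof.
rewrite (_ : quadratic a b c = a \*: id ^+ 2 + b \*: id + cst c); last first.
  by apply/funext.
apply: is_derive_eq (is_deriveD (is_deriveD (is_deriveZ a
  (is_deriveX 2 (is_derive_id x 1))) (is_deriveZ b (is_derive_id x 1)))
  (is_derive_cst c x 1)) _.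
by rewrite /GRing.scale /= expr1; ring.
Qed.

Lemma is_derive_quadratic_expRN (a b c x : R) :
  is_derive x (1 : R) (quadratic_expRN a b c)
    (quadratic_expRN (- eps * a) (2 * a - eps * b) (b - eps * c) x).
Proof.
have dlin : is_derive x (1 : R) (fun y : R => - (eps * y)) (- eps).
  have := is_deriveN (is_deriveZ eps (is_derive_id x 1)).
  by rewrite /GRing.scale /= mulr1.
have dexp := is_derive1_comp (is_derive_expR _) dlin.
rewrite (_ : quadratic_expRN a b c =
  quadratic a b c * (expR \o fun y => - (eps * y))) //.
apply: is_derive_eq (is_deriveM (is_derive_quadratic a b c x) dexp) _.
by rewrite /GRing.scale /= /quadratic_expRN /quadratic; ring.
Qed.

Lemma continuous_quadratic_expRN (a b c : R) : continuous (quadratic_expRN a b c).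
Proof.
move=> x; apply/differentiable_continuous/derivable1_diffP.
by have dq := is_derive_quadratic_expRN a b c x; exact: ex_derive.
Qed.

Lemma cvgy_quadratic_expRN (a b c : R) : quadratic_expRN a b c @ +oo --> (0 : R).
Proof.
rewrite (_ : quadratic_expRN a b c = fun y => a * (y ^+ 2 * expR (- (eps * y))) +
    b * (y ^+ 1 * expR (- (eps * y))) + c * (y ^+ 0 * expR (- (eps * y)))).
  rewrite [X in _ --> X](_ : 0 = a * 0 + b * 0 + c * 0); last by ring.
  by apply: cvgD; first apply: cvgD; apply: cvgM;
    (exact: cvg_cst || exact: cvgy_exprn_expRN).
by apply/funext => y; rewrite /quadratic_expRN /quadratic expr1 expr0; ring.
Qed.

Lemma integral_itv0y_quadratic_expRN (a b c : R) :
  (forall x, 0 <= x -> 0 <= quadratic a b c x) ->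
  (\int[mu]_(x in `[0%R, +oo[) (quadratic_expRN a b c x)%:E
   = (2 * a / eps ^+ 3 + b / eps ^+ 2 + c / eps)%:E)%E.
Proof.
move=> q_ge0.
(* [A], [B], [C] are chosen so that [quadratic_expRN A B C] is an antiderivative *)
pose A := - a / eps; pose B := (2 * A - b) / eps; pose C := (B - c) / eps.
have eps_neq0 : eps != 0 by rewrite gt_eqF.
have -> : quadratic_expRN a b c =
    quadratic_expRN (- eps * A) (2 * A - eps * B) (B - eps * C).
  by congr quadratic_expRN; rewrite /C /B /A; field.
rewrite (ge0_integral_itv0y_antiderivative _ _ _ _ (continuous_quadratic_expRN _ _ _)
  (is_derive_quadratic_expRN A B C) (cvgy_quadratic_expRN A B C)).
- rewrite /quadratic_expRN /quadratic !mulr0 oppr0 expR0.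
  by congr EFin; rewrite /C /B /A; field.
- move=> x x0; rewrite /quadratic_expRN mulr_ge0 ?expR_ge0 //.
  by have := q_ge0 x x0; congr (0 <= quadratic _ _ _ x); rewrite /C /B /A; field.
Qed.

End integrals_of_polynomials_times_expRN.

Section laplace_mechanism.
Context {R : realType}.
Notation mu := (@lebesgue_measure R).
Variable eps : R.
Hypothesis eps_gt0 : 0 < eps.

Lemma laplace_pdf_ge0 (x : R) : 0 <= laplace_pdf eps x.
Proof. by rewrite /laplace_pdf mulr_ge0 ?divr_ge0 ?expR_ge0 ?ltW. Qed.

Lemma continuous_laplace_pdf : continuous (laplace_pdf eps).
Proof.
move=> x; apply: cvgM; first exact: cvg_cst.
apply: continuous_comp; last exact: continuous_expR.
by apply: cvgN; apply: cvgM; [exact: cvg_cst | exact: cvg_norm].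
Qed.

Lemma measurable_laplace_pdf_shift (u : R) :
  measurable_fun setT (fun y : R => (laplace_pdf eps (y - u))%:E).
Proof.
apply/measurable_EFinP; apply: continuous_measurable_fun => y.
apply: (continuous_comp (f := fun y => y - u)); last exact: continuous_laplace_pdf.
by apply: cvgB; [exact: cvg_id | exact: cvg_cst].
Qed.

Lemma laplace_pdf_shift_le (u u' y : R) :
  laplace_pdf eps (y - u) <= expR (eps * `|u - u'|) * laplace_pdf eps (y - u').
Proof.
rewrite /laplace_pdf mulrCA ler_pM2l ?divr_gt0 // -expRD ler_expR.
have : `|y - u'| <= `|y - u| + `|u - u'| by exact: ler_distD.
rewrite -(ler_pM2l eps_gt0) mulrDr; lra.
Qed.

Lemma laplace_prob_shift (u : R) (S : set R) : measurable S ->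
  laplace_prob eps [set v | S (u + v)] =
  (\int[mu]_(y in S) (laplace_pdf eps (y - u))%:E)%E.
Proof.
move=> mS; rewrite [RHS](ge0_integral_shift u) //.
- congr (integral _ _ _); first by apply/seteqP; split=> x /=; rewrite addrC.
  by apply/funext => x; rewrite addrK.
- by apply/measurable_EFinP; exact: measurable_laplace_pdf_shift.
- by move=> x; exact: laplace_pdf_ge0.
Qed.

Lemma laplace_private : additive_noise_lipschitz_private eps (laplace_prob eps).
Proof.
move=> u u' S mS; rewrite !laplace_prob_shift // -ge0_integralZl_EFin //.
- apply: ge0_le_integral => //.
  + by move=> y _; rewrite lee_fin laplace_pdf_ge0.
  + apply: measurable_funTS; exact: measurable_laplace_pdf_shift.
  + apply/measurable_funTS/measurable_funeM; exact: measurable_laplace_pdf_shift.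
  + by move=> y _; rewrite -EFinM lee_fin laplace_pdf_shift_le.
- by move=> y _; rewrite lee_fin laplace_pdf_ge0.
- apply: measurable_funTS; exact: measurable_laplace_pdf_shift.
Qed.

Lemma laplace_second_moment :
  (\int[mu]_v (v ^+ 2 * laplace_pdf eps v)%:E = (2 / eps ^+ 2)%:E)%E.
Proof.
rewrite ge0_symfun_integralT.
- have -> : (\int[mu]_(x in [set x | (0 <= x)%R]) (x ^+ 2 * laplace_pdf eps x)%:E =
      \int[mu]_(x in `[0%R, +oo[) (quadratic_expRN eps (eps / 2) 0 0 x)%:E)%E.
    rewrite -set_itvcy; apply: eq_integral => x; rewrite inE /= in_itv /= andbT => x0.
    by rewrite /laplace_pdf /quadratic_expRN /quadratic ger0_norm //; congr EFin; ring.
  rewrite integral_itv0y_quadratic_expRN // => [|x x0].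
    by rewrite -EFinM; congr EFin; field; rewrite gt_eqF.
  by rewrite /quadratic mul0r !addr0 mulr_ge0 ?divr_ge0 ?sqr_ge0 ?ltW.
- by move=> v; rewrite mulr_ge0 ?sqr_ge0 ?laplace_pdf_ge0.
- move=> v; apply: cvgM; last exact: continuous_laplace_pdf.
  by rewrite expr2; apply: cvgM; exact: cvg_id.
- by move=> v; rewrite /= /laplace_pdf normrN sqrrN.
Qed.

End laplace_mechanism.

Section layer_cake.
Context {R : realType}.
Notation mu := (@lebesgue_measure R).

Lemma integral_itv0c_mul2l (c : R) : 0 <= c ->
  (\int[mu]_(y in `[0%R, c]) (2 * y)%:E = (c ^+ 2)%:E)%E.
Proof.
rewrite le_eqVlt => /predU1P[<-|c_gt0].
  by rewrite set_itv1 integral_set1 expr2 mulr0.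
have dsqr y : is_derive y (1 : R) (fun z : R => z ^+ 2) (2 * y).
  apply: is_derive_eq (is_deriveX 2 (is_derive_id y 1)) _.
  by rewrite /GRing.scale /= mulr1 expr1.
have csqr : continuous (fun z : R => z ^+ 2).
  move=> y; apply/differentiable_continuous/derivable1_diffP.
  by have dy := dsqr y; exact: ex_derive.
rewrite (@continuous_FTC2 _ _ (fun y => y ^+ 2) 0 c c_gt0).
- by rewrite expr0n /= sube0.
- by apply: continuous_subspaceT => y; apply: cvgM; [exact: cvg_cst | exact: cvg_id].
- split; first by move=> y _; have dy := dsqr y; exact: ex_derive.
  + exact/cvg_at_right_filter/csqr.
  + exact/cvg_at_left_filter/csqr.
- by move=> y _; rewrite derive1E (@derive_val _ _ _ y 1 _ _ (dsqr y)).
Qed.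

Variable g : {sigma_finite_measure set R -> \bar R}.

Let T2 := measurableTypeR R.
Let region : set (R * T2) := [set p | 0 <= p.2 <= `|p.1|].

Let measurable_region : measurable region.
Proof.
have -> : region = [set p : R * T2 | 0 <= p.2] `&` [set p : R * T2 | p.2 <= `|p.1|].
  by apply/seteqP; split=> p /=; [move/andP | move=> [p2_ge0 p2_le]; apply/andP].
apply: measurableI; rewrite -[X in measurable X]setTI; apply: measurable_fun_le => //.
exact: measurableT_comp (@normr_measurable R setT) measurable_fst.
Qed.

Let h (p : R * T2) : \bar R := (2 * p.2 * \1_region p)%:E.

Let measurable_h : measurable_fun setT h.
Proof.
apply/measurable_EFinP; apply: measurable_funM; last exact: measurable_indic.
by apply: measurable_funM => //; exact: measurable_snd.
Qed.

Let h_ge0 p : (0 <= h p)%E.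
Proof.
rewrite /h lee_fin indicE; have [|_] := boolP (p \in region); last by rewrite mulr0.
by rewrite in_setE mulr1 => /andP[p2_ge0 _]; rewrite mulr_ge0.
Qed.

Let integral_h_dy (x : R) : (\int[mu]_y h (x, y) = (x ^+ 2)%:E)%E.
Proof.
rewrite -real_normK ?num_real // -integral_itv0c_mul2l // [RHS]integral_mkcond.
apply: eq_integral => y _; rewrite /h patchE indicE /=.
have -> : ((x, y) \in region) = (y \in `[0, `|x|]%classic).
  by apply/idP/idP; rewrite !in_setE.
by case: (y \in _); rewrite ?mulr1 ?mulr0.
Qed.

Let integral_h_dx (y : R) : 0 <= y ->
  (\int[g]_x h (x, y) = (2 * y)%:E * g [set x | (y <= `|x|)%R])%E.
Proof.
move=> y_ge0; have mtail : measurable [set x : R | y <= `|x|].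
  by rewrite -[X in measurable X]setTI; apply: measurable_fun_le.
rewrite -(setIT [set x | y <= `|x|]) -integral_indic // -ge0_integralZl_EFin //.
- apply: eq_integral => x _; rewrite /h -EFinM !indicE.
  suff -> : ((x, y) \in region) = (x \in [set x | y <= `|x|]) by [].
  by apply/idP/idP; rewrite !in_setE /region /= y_ge0.
- by apply/measurable_EFinP; exact: measurable_indic.
- by rewrite mulr_ge0.
Qed.

Lemma integral_sqr_layer_cake : (\int[g]_x (x ^+ 2)%:E =
  \int[mu]_(y in `[0%R, +oo[) ((2 * y)%:E * g [set x | (y <= `|x|)%R]))%E.
Proof.
under eq_integral do rewrite -integral_h_dy.
rewrite (@fubini_tonelli _ _ R T2 R g mu h measurable_h h_ge0) [RHS]integral_mkcond.
apply: eq_integral => y _; rewrite patchE; have [y_ge0|y_lt0] := leP 0 y.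
  by rewrite mem_set ?integral_h_dx //= in_itv /= y_ge0.
rewrite memNset /=; last by rewrite in_itv /= leNgt y_lt0.
apply: integral0_eq => x _.
by rewrite /h indicE memNset ?mulr0 // /region /= leNgt y_lt0.
Qed.

Lemma measurable_layer_cake_integrand : measurable_fun (`[0%R, +oo[%classic : set T2)
  (fun y : T2 => (2 * y)%:E * g [set x | (y <= `|x|)%R])%E.
Proof.
apply: (eq_measurable_fun (fubini_G g h)).
  by move=> y /set_mem /=; rewrite in_itv /= andbT; exact: integral_h_dx.
exact/measurable_funTS/measurable_fun_fubini_tonelli_G.
Qed.

End layer_cake.

Section additive_noise_lower_bound.
Context {R : realType}.
Notation mu := (@lebesgue_measure R).
Variable eps : R.
Hypothesis eps_gt0 : 0 < eps.
Variable g : probability R R.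
Hypothesis g_private : additive_noise_lipschitz_private eps g.

Lemma additive_noise_private_tail (y : R) : 0 < y ->
  ((expR (- (eps * y)))%:E <= g [set v | (y <= `|v|)%R])%E.
Proof.
move=> y_gt0.
have mge (a : R) : measurable [set v : R | a <= v].
  by rewrite -set_itvcy; exact: measurable_itv.
have mle (a : R) : measurable [set v : R | v <= a].
  by rewrite -set_itvNyc; exact: measurable_itv.
have shift_ge (u a : R) : [set v | a <= u + v] = [set v | a - u <= v].
  by apply/seteqP; split=> v /=; rewrite lerBlDl.
have shift_le (u a : R) : [set v | u + v <= a] = [set v | v <= a - u].
  by apply/seteqP; split=> v /=; rewrite lerBrDl.
have mass_right := g_private 0 (- y) _ (mge 0).
have mass_left := g_private 0 y _ (mle 0).
rewrite /= !shift_ge subr0 sub0r opprK gtr0_norm // in mass_right.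
rewrite /= !shift_le subr0 sub0r normrN gtr0_norm // in mass_left.
have tail_split :
    g [set v | y <= `|v|] = (g [set v | (y <= v)%R] + g [set v | (v <= - y)%R])%E.
  rewrite -measureU //; last first.
    by apply/seteqP; split=> v // [/= y_le_v v_le_Ny]; lra.
  congr (g _); apply/seteqP; split=> v /=; rewrite ler_normr lerNr.
    by case/orP; [left | right].
  by case=> ->; rewrite ?orbT.
have total : (1 <= g [set v | (0 <= v)%R] + g [set v | (v <= 0)%R])%E.
  rewrite -(probability_setT g); apply: le_trans (measureU2 g (mge 0) (mle 0)).
  apply: le_measure; rewrite ?inE //; first exact: measurableU.
  by move=> v _; have [|/ltW] := leP 0 v; [left | right].
rewrite -(lee_pmul2l (x := (expR (eps * y))%:E)) ?lte_fin ?expR_gt0 //.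
rewrite -EFinM -expRD addrN expR0 tail_split ge0_muleDr //.
exact: le_trans total (leeD mass_right mass_left).
Qed.

Lemma additive_noise_private_second_moment :
  ((2 / eps ^+ 2)%:E <= \int[g]_v (v ^+ 2)%:E)%E.
Proof.
have <- : (\int[mu]_(x in `[0%R, +oo[) (quadratic_expRN eps 0 2 0 x)%:E
    = (2 / eps ^+ 2)%:E)%E.
  rewrite integral_itv0y_quadratic_expRN // => [|x x_ge0].
    by rewrite !mulr0 !mul0r add0r addr0.
  by rewrite /quadratic mul0r add0r addr0 mulr_ge0.
rewrite integral_sqr_layer_cake; apply: ge0_le_integral => //.
- move=> x; rewrite /= in_itv /= andbT => x_ge0.
  by rewrite lee_fin /quadratic_expRN /quadratic mul0r add0r addr0 !mulr_ge0 ?expR_ge0.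
- apply/measurable_EFinP/measurable_funTS; apply: continuous_measurable_fun.
  exact: continuous_quadratic_expRN.
- exact: measurable_layer_cake_integrand.
move=> y; rewrite /= in_itv /= andbT le_eqVlt => /predU1P[<-|y_gt0].
  by rewrite /quadratic_expRN /quadratic !mulr0 !addr0 mul0r mul0e.
rewrite /quadratic_expRN /quadratic mul0r add0r addr0 EFinM lee_wpmul2l ?lee_fin ?mulr_ge0 //.
  exact: ltW.
exact: additive_noise_private_tail.
Qed.

End additive_noise_lower_bound.

Theorem theorem1 (R : realType) (eps : R) (heps : 0 < eps) :
  (forall g : probability R R,
     additive_noise_lipschitz_private eps g ->
     ((2 / eps ^+ 2)%:E <= \int[g]_v (v ^+ 2)%:E)%E)
  /\ additive_noise_lipschitz_private eps (laplace_prob eps)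
  /\ (\int[lebesgue_measure]_v (v ^+ 2 * laplace_pdf eps v)%:E = (2 / eps ^+ 2)%:E)%E.
Proof.
split; first by move=> g; exact: additive_noise_private_second_moment.
by split; [exact: laplace_private | exact: laplace_second_moment].
Qed.
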